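(* Let $\mathbb{A}$ be a 2-category having the two-dimensional cokernel diagram of a 1-cell $p:e\to b$. Then: (1) $p$ is monadic if and only if $p$ has a left adjoint and $p$ is an effective faithful morphism; (2) $p$ is comonadic if and only if $p$ has a right adjoint and $p$ is an effective faithful morphism.
   Context: A 2-category is a $\mathbf{Cat}$-enriched category; composition of 1-cells is juxtaposition, vertical composition of 2-cells is $\cdot$, horizontal composition is $\ast$, $\mathrm{id}_f$ is the identity 2-cell on $f$. $\mathbb{A}^{\mathrm{co}}$ is obtained by reversing 2-cells. A 1-cell is an equivalence if it has a pseudo-inverse up to invertible 2-cells. Adjunctions in $\mathbb{A}$ are given by unit and counit 2-cells satisfying the triangle identities. Opcomma object of $p$ along itself: $b\uparrow_p b$ with $\delta^0,\delta^1:b\to b\uparrow_pb$ and $\alpha:\delta^1p\Rightarrow\delta^0p$ such that for every $y$, $h\mapsto(h\delta^0,h\delta^1,\mathrm{id}_h\ast\alpha)$, $\xi\mapsto(\xi\ast\mathrm{id}_{\delta^0},\xi\ast\mathrm{id}_{\delta^1})$ is an isomorphism from $\mathbb{A}(b\uparrow_pb,y)$ onto the category of triples $(h_0,h_1:b\to y,\beta:h_1p\Rightarrow h_0p)$ with morphisms pairs $(\xi_0,\xi_1)$ with $(\xi_0\ast\mathrm{id}_p)\cdot\beta=\beta'\cdot(\xi_1\ast\mathrm{id}_p)$. A two-dimensional pushout of a span $f_0:c\to c_0$, $f_1:c\to c_1$ is $P$ with $q_0,q_1$, $q_0f_0=q_1f_1$, such that $k\mapsto(kq_0,kq_1)$ is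 an isomorphism from $\mathbb{A}(P,y)$ onto the category of pairs $(k_0,k_1)$ with $k_0f_0=k_1f_1$ and morphisms pairs of 2-cells $(\xi_0,\xi_1)$ with $\xi_0\ast\mathrm{id}_{f_0}=\xi_1\ast\mathrm{id}_{f_1}$. $\mathbb{A}$ has the two-dimensional cokernel diagram of $p$ if it has $b\uparrow_pb$ and a two-dimensional pushout $b\uparrow_pb\uparrow_pb$ of $(\delta^0,\delta^1)$ with $D^0,D^2$, $D^2\delta^0=D^0\delta^1$; $D^1$ is the unique 1-cell with $D^1\delta^1=D^2\delta^1$, $D^1\delta^0=D^0\delta^0$, $\mathrm{id}_{D^1}\ast\alpha=(\mathrm{id}_{D^0}\ast\alpha)\cdot(\mathrm{id}_{D^2}\ast\alpha)$; $s^0$ is the unique 1-cell with $s^0\delta^0=s^0\delta^1=\mathrm{id}_b$, $\mathrm{id}_{s^0}\ast\alpha=\mathrm{id}_p$. Effective faithful: $\mathrm{Desc}_p(y)$ has objects $(h:y\to b,\beta:\delta^1h\Rightarrow\delta^0h)$ with $(\mathrm{id}_{D^0}\ast\beta)\cdot(\mathrm{id}_{D^2}\ast\beta)=\mathrm{id}_{D^1}\ast\beta$, $\mathrm{id}_{s^0}\ast\beta=\mathrm{id}_h$, morphisms 2-cells $\xi:h_1\Rightarrow h_0$ with $\beta_0\cdot(\mathrm{id}_{\delta^1}\ast\xi)=(\mathrm{id}_{\delta^0}\ast\xi)\cdot\beta_1$; a lax descent object is $L$ with $d:L\to b$, $\Psi:\delta^1d\Rightarrow\delta^0d$ such that $g\mapsto(dg,\Psi\ast\mathrm{id}_g)$,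 $\xi\mapsto\mathrm{id}_d\ast\xi$ is an isomorphism $\mathbb{A}(y,L)\cong\mathrm{Desc}_p(y)$ for all $y$; $p^H$ is unique with $dp^H=p$, $\Psi\ast\mathrm{id}_{p^H}=\alpha$. $p$ is an effective faithful morphism if $\mathbb{A}$ has the two-dimensional cokernel diagram of $p$, a lax descent object of it, and $p^H$ is an equivalence. Monadic: a right Kan extension of $f$ along $g$ is $(r,\gamma:rg\Rightarrow f)$ with $\beta\mapsto\gamma\cdot(\beta\ast\mathrm{id}_g)$ bijective from 2-cells $k\Rightarrow r$ to 2-cells $kg\Rightarrow f$. The codensity monad of $p$ is $(b,t,m,\eta)$ where $(t,\gamma)$ is a right Kan extension of $p$ along $p$, $m$ unique with $\gamma\cdot(m\ast\mathrm{id}_p)=\gamma\cdot(\mathrm{id}_t\ast\gamma)$, $\eta$ unique with $\gamma\cdot(\eta\ast\mathrm{id}_p)=\mathrm{id}_p$. An Eilenberg–Moore object of $\mathsf{T}=(b,t,m,\eta)$ is $b^{\mathsf{T}}$ with $u:b^{\mathsf{T}}\to b$, $\mu:tu\Rightarrow u$ such that $g\mapsto(ug,\mu\ast\mathrm{id}_g)$ is an isomorphism from $\mathbb{A}(y,b^{\mathsf{T}})$ onto the category of pairs $(h,\beta:th\Rightarrow h)$ with $\beta\cdot(\mathrm{id}_t\ast\beta)=\beta\cdot(m\ast\mathrm{id}_h)$, $\beta\cdot(\eta\ast\mathrm{id}_h)=\mathrm{id}_h$ (morphisms $\xi$ with $\xi\cdot\beta_1=\beta_0\cdot(\mathrm{id}_t\ast\xi)$).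 $p$ is monadic if it has a codensity monad $\mathsf{T}$, $\mathbb{A}$ has an Eilenberg–Moore object of $\mathsf{T}$, and the unique $p^{\mathsf{T}}$ with $up^{\mathsf{T}}=p$, $\mu\ast\mathrm{id}_{p^{\mathsf{T}}}=\gamma$ is an equivalence. $p$ is comonadic if the corresponding 1-cell of $\mathbb{A}^{\mathrm{co}}$ is monadic in $\mathbb{A}^{\mathrm{co}}$. *)

(* Encoding: for objects a b,
   [Hom a b] are the 1-cells a -> b and [Cell a b] are all 2-cells between
   1-cells a -> b, each with a source [src] and target [tgt] 1-cell.
   [vcomp be al] is the vertical composite be . al (al first); it is only
   meaningful when [src be = tgt al] (its value otherwise is junk and no axiom
   mentions it).  [hcomp be al] is the horizontal composite be * al, with
   [src (be * al) = src be  src al] (juxtaposition = [comp]). *)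
Record TwoCat : Type := {
  Ob : Type;
  Hom : Ob -> Ob -> Type;
  Cell : Ob -> Ob -> Type;
  src : forall a b, Cell a b -> Hom a b;
  tgt : forall a b, Cell a b -> Hom a b;
  id1 : forall a, Hom a a;
  comp : forall a b c, Hom b c -> Hom a b -> Hom a c;
  id2 : forall a b, Hom a b -> Cell a b;
  vcomp : forall a b, Cell a b -> Cell a b -> Cell a b;
  hcomp : forall a b c, Cell b c -> Cell a b -> Cell a c;
  comp_assoc : forall a b c d (h : Hom c d) (g : Hom b c) (f : Hom a b),
    comp _ _ _ h (comp _ _ _ g f) = comp _ _ _ (comp _ _ _ h g) f;
  comp_id_l : forall a b (f : Hom a b), comp _ _ _ (id1 b) f = f;
  comp_id_r : forall a b (f : Hom a b), comp _ _ _ f (id1 a) = f;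
  src_id2 : forall a b (f : Hom a b), src _ _ (id2 _ _ f) = f;
  tgt_id2 : forall a b (f : Hom a b), tgt _ _ (id2 _ _ f) = f;
  src_vcomp : forall a b (be al : Cell a b), src _ _ be = tgt _ _ al ->
    src _ _ (vcomp _ _ be al) = src _ _ al;
  tgt_vcomp : forall a b (be al : Cell a b), src _ _ be = tgt _ _ al ->
    tgt _ _ (vcomp _ _ be al) = tgt _ _ be;
  vcomp_assoc : forall a b (ga be al : Cell a b),
    src _ _ ga = tgt _ _ be -> src _ _ be = tgt _ _ al ->
    vcomp _ _ ga (vcomp _ _ be al) = vcomp _ _ (vcomp _ _ ga be) al;
  vcomp_id_l : forall a b (al : Cell a b), vcomp _ _ (id2 _ _ (tgt _ _ al)) al = al;
  vcomp_id_r : forall a b (al : Cell a b), vcomp _ _ al (id2 _ _ (src _ _ al)) = al;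
  src_hcomp : forall a b c (be : Cell b c) (al : Cell a b),
    src _ _ (hcomp _ _ _ be al) = comp _ _ _ (src _ _ be) (src _ _ al);
  tgt_hcomp : forall a b c (be : Cell b c) (al : Cell a b),
    tgt _ _ (hcomp _ _ _ be al) = comp _ _ _ (tgt _ _ be) (tgt _ _ al);
  hcomp_assoc : forall a b c d (ga : Cell c d) (be : Cell b c) (al : Cell a b),
    hcomp _ _ _ ga (hcomp _ _ _ be al) = hcomp _ _ _ (hcomp _ _ _ ga be) al;
  hcomp_id_l : forall a b (al : Cell a b), hcomp _ _ _ (id2 _ _ (id1 b)) al = al;
  hcomp_id_r : forall a b (al : Cell a b), hcomp _ _ _ al (id2 _ _ (id1 a)) = al;
  hcomp_id2 : forall a b c (g : Hom b c) (f : Hom a b),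
    hcomp _ _ _ (id2 _ _ g) (id2 _ _ f) = id2 _ _ (comp _ _ _ g f);
  interchange : forall a b c (de ga : Cell b c) (be al : Cell a b),
    src _ _ de = tgt _ _ ga -> src _ _ be = tgt _ _ al ->
    hcomp _ _ _ (vcomp _ _ de ga) (vcomp _ _ be al)
    = vcomp _ _ (hcomp _ _ _ de be) (hcomp _ _ _ ga al)
}.

Arguments Hom {t} _ _.
Arguments Cell {t} _ _.
Arguments src {t a b} _.
Arguments tgt {t a b} _.
Arguments id1 {t} _.
Arguments comp {t a b c} _ _.
Arguments id2 {t a b} _.
Arguments vcomp {t a b} _ _.
Arguments hcomp {t a b c} _ _.

Section Co.
Variable A : TwoCat.

Lemma co_src_vcomp a b (be al : Cell (t:=A) a b) : tgt be = src al ->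
  tgt (vcomp al be) = tgt al.
Proof. intro H. apply tgt_vcomp. symmetry; exact H. Qed.
Lemma co_tgt_vcomp a b (be al : Cell (t:=A) a b) : tgt be = src al ->
  src (vcomp al be) = src be.
Proof. intro H. apply src_vcomp. symmetry; exact H. Qed.
Lemma co_vcomp_assoc a b (ga be al : Cell (t:=A) a b) :
  tgt ga = src be -> tgt be = src al ->
  vcomp (vcomp al be) ga = vcomp al (vcomp be ga).
Proof. intros H1 H2. symmetry. apply vcomp_assoc; symmetry; assumption. Qed.
Lemma co_interchange a b c (de ga : Cell (t:=A) b c) (be al : Cell a b) :
  tgt de = src ga -> tgt be = src al ->
  hcomp (vcomp ga de) (vcomp al be) = vcomp (hcomp ga al) (hcomp de be).
Proof. intros H1 H2. apply interchange; symmetry; assumption. Qed.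

Definition co : TwoCat := {|
  Ob := Ob A; Hom := @Hom A; Cell := @Cell A;
  src := fun a b x => @tgt A a b x;
  tgt := fun a b x => @src A a b x;
  id1 := @id1 A; comp := @comp A; id2 := @id2 A;
  vcomp := fun a b be al => @vcomp A a b al be;
  hcomp := @hcomp A;
  comp_assoc := comp_assoc A; comp_id_l := comp_id_l A; comp_id_r := comp_id_r A;
  src_id2 := tgt_id2 A; tgt_id2 := src_id2 A;
  src_vcomp := co_src_vcomp; tgt_vcomp := co_tgt_vcomp;
  vcomp_assoc := co_vcomp_assoc;
  vcomp_id_l := fun a b al => vcomp_id_r A a b al;
  vcomp_id_r := fun a b al => vcomp_id_l A a b al;
  src_hcomp := tgt_hcomp A; tgt_hcomp := src_hcomp A;
  hcomp_assoc := hcomp_assoc A; hcomp_id_l := hcomp_id_l A;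
  hcomp_id_r := hcomp_id_r A; hcomp_id2 := hcomp_id2 A;
  interchange := co_interchange |}.
End Co.

Section Notions.
Context {A : TwoCat}.

Definition cell_in {a b : Ob A} (th : Cell a b) (f g : Hom a b) : Prop :=
  src th = f /\ tgt th = g.

Definition invertible {a b : Ob A} (th : Cell a b) (f g : Hom a b) : Prop :=
  cell_in th f g /\
  exists th' : Cell a b, cell_in th' g f /\ vcomp th' th = id2 f /\ vcomp th th' = id2 g.

Definition is_equivalence {a b : Ob A} (f : Hom a b) : Prop :=
  exists (g : Hom b a) (th1 : Cell a a) (th2 : Cell b b),
    invertible th1 (comp g f) (id1 a) /\ invertible th2 (comp f g) (id1 b).

Definition is_adjunction {a b : Ob A} (l : Hom b a) (r : Hom a b)
  (et : Cell b b) (ep : Cell a a) : Prop :=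
  cell_in et (id1 b) (comp r l) /\ cell_in ep (comp l r) (id1 a) /\
  vcomp (hcomp ep (id2 l)) (hcomp (id2 l) et) = id2 l /\
  vcomp (hcomp (id2 r) ep) (hcomp et (id2 r)) = id2 r.

Definition has_left_adjoint {e b : Ob A} (p : Hom e b) : Prop :=
  exists (l : Hom b e) (et : Cell b b) (ep : Cell e e), is_adjunction l p et ep.

Definition has_right_adjoint {e b : Ob A} (p : Hom e b) : Prop :=
  exists (r : Hom b e) (et : Cell e e) (ep : Cell b b), is_adjunction p r et ep.

(* Opcomma object (P, d0, d1, al) of p along itself; "isomorphism of categories"
   = bijective on objects and on morphisms. *)
Definition is_opcomma {e b P : Ob A} (p : Hom e b) (d0 d1 : Hom b P)
  (al : Cell e P) : Prop :=
  cell_in al (comp d1 p) (comp d0 p) /\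
  forall y : Ob A,
    (forall (h0 h1 : Hom b y) (be : Cell e y), cell_in be (comp h1 p) (comp h0 p) ->
       exists! h : Hom P y, comp h d0 = h0 /\ comp h d1 = h1 /\ hcomp (id2 h) al = be) /\
    (forall (h h' : Hom P y) (x0 x1 : Cell b y),
       cell_in x0 (comp h d0) (comp h' d0) -> cell_in x1 (comp h d1) (comp h' d1) ->
       vcomp (hcomp x0 (id2 p)) (hcomp (id2 h) al)
         = vcomp (hcomp (id2 h') al) (hcomp x1 (id2 p)) ->
       exists! x : Cell P y, cell_in x h h' /\ hcomp x (id2 d0) = x0 /\ hcomp x (id2 d1) = x1).

Definition is_2pushout {c c0 c1 Q : Ob A} (f0 : Hom c c0) (f1 : Hom c c1)
  (q0 : Hom c0 Q) (q1 : Hom c1 Q) : Prop :=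
  comp q0 f0 = comp q1 f1 /\
  forall y : Ob A,
    (forall (k0 : Hom c0 y) (k1 : Hom c1 y), comp k0 f0 = comp k1 f1 ->
       exists! k : Hom Q y, comp k q0 = k0 /\ comp k q1 = k1) /\
    (forall (k k' : Hom Q y) (x0 : Cell c0 y) (x1 : Cell c1 y),
       cell_in x0 (comp k q0) (comp k' q0) -> cell_in x1 (comp k q1) (comp k' q1) ->
       hcomp x0 (id2 f0) = hcomp x1 (id2 f1) ->
       exists! x : Cell Q y, cell_in x k k' /\ hcomp x (id2 q0) = x0 /\ hcomp x (id2 q1) = x1).

Record CokData {e b : Ob A} (p : Hom e b) : Type := {
  ck_P : Ob A;
  ck_d0 : Hom b ck_P;
  ck_d1 : Hom b ck_P;
  ck_al : Cell e ck_P;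
  ck_Q : Ob A;
  ck_D0 : Hom ck_P ck_Q;
  ck_D1 : Hom ck_P ck_Q;
  ck_D2 : Hom ck_P ck_Q;
  ck_s0 : Hom ck_P b
}.
Arguments ck_P {e b p}. Arguments ck_d0 {e b p}. Arguments ck_d1 {e b p}.
Arguments ck_al {e b p}. Arguments ck_Q {e b p}. Arguments ck_D0 {e b p}.
Arguments ck_D1 {e b p}. Arguments ck_D2 {e b p}. Arguments ck_s0 {e b p}.

Definition is_cokernel_diagram {e b : Ob A} (p : Hom e b) (K : CokData p) : Prop :=
  is_opcomma p (ck_d0 K) (ck_d1 K) (ck_al K) /\
  is_2pushout (ck_d0 K) (ck_d1 K) (ck_D2 K) (ck_D0 K) /\
  (comp (ck_D1 K) (ck_d1 K) = comp (ck_D2 K) (ck_d1 K) /\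
   comp (ck_D1 K) (ck_d0 K) = comp (ck_D0 K) (ck_d0 K) /\
   hcomp (id2 (ck_D1 K)) (ck_al K)
     = vcomp (hcomp (id2 (ck_D0 K)) (ck_al K)) (hcomp (id2 (ck_D2 K)) (ck_al K))) /\
  (comp (ck_s0 K) (ck_d0 K) = id1 b /\ comp (ck_s0 K) (ck_d1 K) = id1 b /\
   hcomp (id2 (ck_s0 K)) (ck_al K) = id2 p).

Definition has_cokernel_diagram {e b : Ob A} (p : Hom e b) : Prop :=
  exists K : CokData p, is_cokernel_diagram p K.

Definition is_desc {e b : Ob A} {p : Hom e b} (K : CokData p) {y : Ob A}
  (h : Hom y b) (be : Cell y (ck_P K)) : Prop :=
  cell_in be (comp (ck_d1 K) h) (comp (ck_d0 K) h) /\
  vcomp (hcomp (id2 (ck_D0 K)) be) (hcomp (id2 (ck_D2 K)) be) = hcomp (id2 (ck_D1 K)) be /\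
  hcomp (id2 (ck_s0 K)) be = id2 h.

Definition is_desc_mor {e b : Ob A} {p : Hom e b} (K : CokData p) {y : Ob A}
  (h1 : Hom y b) (be1 : Cell y (ck_P K)) (h0 : Hom y b) (be0 : Cell y (ck_P K))
  (x : Cell y b) : Prop :=
  cell_in x h1 h0 /\
  vcomp be0 (hcomp (id2 (ck_d1 K)) x) = vcomp (hcomp (id2 (ck_d0 K)) x) be1.

Definition is_lax_descent {e b : Ob A} {p : Hom e b} (K : CokData p) {L : Ob A}
  (d : Hom L b) (Ps : Cell L (ck_P K)) : Prop :=
  cell_in Ps (comp (ck_d1 K) d) (comp (ck_d0 K) d) /\
  forall y : Ob A,
    (forall g : Hom y L, is_desc K (comp d g) (hcomp Ps (id2 g))) /\
    (forall (g g' : Hom y L) (x : Cell y L), cell_in x g g' ->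
       is_desc_mor K (comp d g) (hcomp Ps (id2 g)) (comp d g') (hcomp Ps (id2 g'))
         (hcomp (id2 d) x)) /\
    (forall (h : Hom y b) (be : Cell y (ck_P K)), is_desc K h be ->
       exists! g : Hom y L, comp d g = h /\ hcomp Ps (id2 g) = be) /\
    (forall (g g' : Hom y L) (x : Cell y b),
       is_desc_mor K (comp d g) (hcomp Ps (id2 g)) (comp d g') (hcomp Ps (id2 g')) x ->
       exists! xi : Cell y L, cell_in xi g g' /\ hcomp (id2 d) xi = x).

Definition effective_faithful {e b : Ob A} (p : Hom e b) : Prop :=
  exists K : CokData p, is_cokernel_diagram p K /\
  exists (L : Ob A) (d : Hom L b) (Ps : Cell L (ck_P K)),
    is_lax_descent K d Ps /\
    exists pH : Hom e L,
      comp d pH = p /\ hcomp Ps (id2 pH) = ck_al K /\ is_equivalence pH.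

Definition is_right_kan {a c d : Ob A} (f : Hom a d) (g : Hom a c)
  (r : Hom c d) (ga : Cell a d) : Prop :=
  cell_in ga (comp r g) f /\
  forall (k : Hom c d) (th : Cell a d), cell_in th (comp k g) f ->
    exists! be : Cell c d, cell_in be k r /\ vcomp ga (hcomp be (id2 g)) = th.

Definition is_codensity_monad {e b : Ob A} (p : Hom e b) (t : Hom b b)
  (ga : Cell e b) (m : Cell b b) (et : Cell b b) : Prop :=
  is_right_kan p p t ga /\
  cell_in m (comp t t) t /\
  vcomp ga (hcomp m (id2 p)) = vcomp ga (hcomp (id2 t) ga) /\
  cell_in et (id1 b) t /\
  vcomp ga (hcomp et (id2 p)) = id2 p.

Definition is_alg {b : Ob A} (t : Hom b b) (m et : Cell b b) {y : Ob A}
  (h : Hom y b) (be : Cell y b) : Prop :=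
  cell_in be (comp t h) h /\
  vcomp be (hcomp (id2 t) be) = vcomp be (hcomp m (id2 h)) /\
  vcomp be (hcomp et (id2 h)) = id2 h.

Definition is_alg_mor {b : Ob A} (t : Hom b b) {y : Ob A}
  (h1 : Hom y b) (be1 : Cell y b) (h0 : Hom y b) (be0 : Cell y b) (x : Cell y b) : Prop :=
  cell_in x h1 h0 /\ vcomp x be1 = vcomp be0 (hcomp (id2 t) x).

Definition is_EM_object {b : Ob A} (t : Hom b b) (m et : Cell b b) {bT : Ob A}
  (u : Hom bT b) (mu : Cell bT b) : Prop :=
  cell_in mu (comp t u) u /\
  forall y : Ob A,
    (forall g : Hom y bT, is_alg t m et (comp u g) (hcomp mu (id2 g))) /\
    (forall (g g' : Hom y bT) (x : Cell y bT), cell_in x g g' ->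
       is_alg_mor t (comp u g) (hcomp mu (id2 g)) (comp u g') (hcomp mu (id2 g'))
         (hcomp (id2 u) x)) /\
    (forall (h : Hom y b) (be : Cell y b), is_alg t m et h be ->
       exists! g : Hom y bT, comp u g = h /\ hcomp mu (id2 g) = be) /\
    (forall (g g' : Hom y bT) (x : Cell y b),
       is_alg_mor t (comp u g) (hcomp mu (id2 g)) (comp u g') (hcomp mu (id2 g')) x ->
       exists! xi : Cell y bT, cell_in xi g g' /\ hcomp (id2 u) xi = x).

Definition monadic {e b : Ob A} (p : Hom e b) : Prop :=
  exists (t : Hom b b) (ga : Cell e b) (m et : Cell b b),
    is_codensity_monad p t ga m et /\
    exists (bT : Ob A) (u : Hom bT b) (mu : Cell bT b),
      is_EM_object t m et u mu /\
      exists pT : Hom e bT,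
        comp u pT = p /\ hcomp mu (id2 pT) = ga /\ is_equivalence pT.

End Notions.

Definition comonadic {A : TwoCat} {e b : Ob A} (p : Hom e b) : Prop :=
  @monadic (co A) e b p.

From Stdlib Require Import Setoid.

(* If [p] has a left adjoint [l], its codensity monad [T] exists, and the opcomma
   object [P = b ↑_p b] gives a comparison map [r : P -> b] with [r d0 = 1], [r d1 = t] and
   [r alpha = gamma], together with a cell [kappa : d1 => d0 t], the mate of [alpha]
   under the adjunction.  Whiskering by [r] and [beta |-> (d0 beta) . (kappa h)]
   are then mutually inverse between cells [d1 h => d0 h] and cells [t h => h]; under
   this bijection the cocycle and normalisation conditions of descent data become the
   associativity and unit laws of [T]-algebras, and descent morphisms become algebra
   morphisms.  So lax descent objects of [p] are exactly Eilenberg-Moore objects of [T],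
   and [p^H] is an equivalence iff [p^T] is.  A monadic [p] has a left adjoint: the free
   algebra functor followed by a pseudo-inverse of [p^T].  The comonadic case is the
   monadic case in [A^co], in which cokernel diagrams, lax descent objects and
   effective faithfulness are preserved. *)


Section CellTyping.
Context {A : TwoCat}.

Lemma cell_in_id2 {a b} (f : Hom (t:=A) a b) : cell_in (id2 f) f f.
Proof. split; [apply src_id2 | apply tgt_id2]. Qed.

Lemma cell_in_vcomp {a b} (be al : Cell (t:=A) a b) f g g' h :
  cell_in be g' h -> cell_in al f g -> g = g' -> cell_in (vcomp be al) f h.
Proof.
  intros [H1 H2] [H3 H4] E; subst. split.
  - rewrite src_vcomp; auto.
  - rewrite tgt_vcomp; auto.
Qed.

Lemma cell_in_hcomp {a b c} (be : Cell (t:=A) b c) (al : Cell a b) g g' f f' :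
  cell_in be g g' -> cell_in al f f' -> cell_in (hcomp be al) (comp g f) (comp g' f').
Proof.
  intros [H1 H2] [H3 H4]; split.
  - rewrite src_hcomp; congruence.
  - rewrite tgt_hcomp; congruence.
Qed.

Lemma cell_in_eq {a b} (al : Cell (t:=A) a b) f g f' g' :
  cell_in al f g -> f = f' -> g = g' -> cell_in al f' g'.
Proof. intros H E1 E2; subst; exact H. Qed.

Lemma composable_of_cell_in {a b} (x y : Cell (t:=A) a b) f g g' h :
  cell_in x g' h -> cell_in y f g -> g = g' -> src x = tgt y.
Proof. intros [H1 H2] [H3 H4] E; congruence. Qed.

Lemma src_of_cell_in {a b} (x : Cell (t:=A) a b) f g f' :
  cell_in x f g -> f = f' -> src x = f'.
Proof. intros [H1 H2] E; congruence. Qed.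

Lemma tgt_of_cell_in {a b} (x : Cell (t:=A) a b) f g g' :
  cell_in x f g -> g = g' -> tgt x = g'.
Proof. intros [H1 H2] E; congruence. Qed.

Lemma comp_eq_assoc {a b c d} (x : Hom (t:=A) c d) (y : Hom b c) (z : Hom b d) :
  comp x y = z -> forall w : Hom a b, comp x (comp y w) = comp z w.
Proof. intros H w. rewrite comp_assoc, H. reflexivity. Qed.

End CellTyping.

(* [hom_eq] proves equations of 1-cells by right-associating and rewriting with
   the 1-cell equations in the context; [cell_typing] and [side_cond] discharge the
   typing and composability side conditions of 2-cell expressions with it. *)
Ltac hom_norm :=
  repeat rewrite <- comp_assoc; repeat rewrite comp_id_l; repeat rewrite comp_id_r.

Ltac hom_step :=
  match goal with
  | H : @comp _ _ _ _ ?x ?y = _ |- _ =>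
      first [ rewrite H | rewrite (comp_eq_assoc _ _ _ H) ]
  end.

Ltac hom_eq := hom_norm; repeat (hom_step; hom_norm); reflexivity.

Ltac cell_typing0 :=
  lazymatch goal with
  | |- cell_in (vcomp _ _) _ _ => eapply cell_in_vcomp; [cell_typing0 | cell_typing0 | hom_eq]
  | |- cell_in (hcomp _ _) _ _ => eapply cell_in_hcomp; [cell_typing0 | cell_typing0]
  | |- cell_in (id2 _) _ _ => apply cell_in_id2
  | |- _ => eassumption
  end.

Ltac cell_typing := eapply cell_in_eq; [cell_typing0 | hom_eq | hom_eq].

Ltac side_cond :=
  lazymatch goal with
  | |- cell_in _ _ _ => cell_typing
  | |- src _ = tgt _ => eapply composable_of_cell_in; [cell_typing0 | cell_typing0 | hom_eq]
  | |- src _ = _ => eapply src_of_cell_in; [cell_typing0 | hom_eq]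
  | |- tgt _ = _ => eapply tgt_of_cell_in; [cell_typing0 | hom_eq]
  | |- _ = src _ => symmetry; eapply src_of_cell_in; [cell_typing0 | hom_eq]
  | |- _ = tgt _ => symmetry; eapply tgt_of_cell_in; [cell_typing0 | hom_eq]
  end.

Section TwoCatFacts.
Context {A : TwoCat}.

Lemma vcomp_id_l_eq {a b} (x : Cell (t:=A) a b) f : tgt x = f -> vcomp (id2 f) x = x.
Proof. intros <-; apply vcomp_id_l. Qed.

Lemma vcomp_id_r_eq {a b} (x : Cell (t:=A) a b) f : src x = f -> vcomp x (id2 f) = x.
Proof. intros <-; apply vcomp_id_r. Qed.

Lemma vcompA {a b} (z y x : Cell (t:=A) a b) : src z = tgt y -> src y = tgt x ->
  vcomp z (vcomp y x) = vcomp (vcomp z y) x.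
Proof. apply vcomp_assoc. Qed.

Lemma hcompA {a b c d} (z : Cell (t:=A) c d) (y : Cell b c) (x : Cell a b) :
  hcomp z (hcomp y x) = hcomp (hcomp z y) x.
Proof. apply hcomp_assoc. Qed.

Lemma id2_congr {a b} (f g : Hom (t:=A) a b) : f = g -> id2 f = id2 g.
Proof. intros ->; reflexivity. Qed.

Lemma hcomp_whisker_l_first {a b c} (y : Cell (t:=A) b c) (x : Cell a b) :
  hcomp y x = vcomp (hcomp y (id2 (tgt x))) (hcomp (id2 (src y)) x).
Proof.
  rewrite <- interchange by (rewrite ?src_id2, ?tgt_id2; reflexivity).
  rewrite vcomp_id_r, vcomp_id_l. reflexivity.
Qed.

Lemma hcomp_whisker_r_first {a b c} (y : Cell (t:=A) b c) (x : Cell a b) :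
  hcomp y x = vcomp (hcomp (id2 (tgt y)) x) (hcomp y (id2 (src x))).
Proof.
  rewrite <- interchange by (rewrite ?src_id2, ?tgt_id2; reflexivity).
  rewrite vcomp_id_r, vcomp_id_l. reflexivity.
Qed.

Lemma whisker_exchange {a b c} (y : Cell (t:=A) b c) (x : Cell a b) f f' g g' :
  cell_in y f f' -> cell_in x g g' ->
  vcomp (hcomp y (id2 g')) (hcomp (id2 f) x) = vcomp (hcomp (id2 f') x) (hcomp y (id2 g)).
Proof.
  intros [H1 H2] [H3 H4]. rewrite <- H1, <- H2, <- H3, <- H4.
  rewrite <- hcomp_whisker_l_first, <- hcomp_whisker_r_first. reflexivity.
Qed.

Lemma whisker_l_vcomp {a b c} (f : Hom (t:=A) b c) (y x : Cell a b) : src y = tgt x ->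
  hcomp (id2 f) (vcomp y x) = vcomp (hcomp (id2 f) y) (hcomp (id2 f) x).
Proof.
  intros H. rewrite <- interchange by (rewrite ?src_id2, ?tgt_id2; auto).
  rewrite vcomp_id_l_eq; auto. apply tgt_id2.
Qed.

Lemma whisker_r_vcomp {a b c} (f : Hom (t:=A) a b) (y x : Cell b c) : src y = tgt x ->
  hcomp (vcomp y x) (id2 f) = vcomp (hcomp y (id2 f)) (hcomp x (id2 f)).
Proof.
  intros H. rewrite <- interchange by (rewrite ?src_id2, ?tgt_id2; auto).
  rewrite vcomp_id_l_eq; auto. apply tgt_id2.
Qed.

Lemma whisker_l_comp {a b c d} (g : Hom (t:=A) c d) (f : Hom b c) (x : Cell a b) :
  hcomp (id2 g) (hcomp (id2 f) x) = hcomp (id2 (comp g f)) x.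
Proof. rewrite hcomp_assoc, hcomp_id2; reflexivity. Qed.

Lemma whisker_r_comp {a b c d} (x : Cell (t:=A) c d) (g : Hom b c) (f : Hom a b) :
  hcomp (hcomp x (id2 g)) (id2 f) = hcomp x (id2 (comp g f)).
Proof. rewrite <- hcomp_assoc, hcomp_id2; reflexivity. Qed.

Lemma naturality_from_id {a b} (y : Cell (t:=A) b b) (F : Hom b b) (x : Cell a b) G H :
  cell_in y (id1 b) F -> cell_in x G H ->
  vcomp (hcomp (id2 F) x) (hcomp y (id2 G)) = vcomp (hcomp y (id2 H)) x.
Proof.
  intros Hy Hx. rewrite <- (whisker_exchange y x (id1 b) F G H) by auto.
  rewrite hcomp_id_l. reflexivity.
Qed.

Lemma naturality_to_id {a b} (y : Cell (t:=A) b b) (F : Hom b b) (x : Cell a b) G H :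
  cell_in y F (id1 b) -> cell_in x G H ->
  vcomp (hcomp y (id2 H)) (hcomp (id2 F) x) = vcomp x (hcomp y (id2 G)).
Proof.
  intros Hy Hx. rewrite (whisker_exchange y x F (id1 b) G H) by auto.
  rewrite hcomp_id_l. reflexivity.
Qed.

Lemma cell_factor_through_unit {P b y} (k : Hom (t:=A) b P) (R : Hom P b)
  (X : Cell P P) (Z : Hom y P) (h : Hom y b) (z : Cell y P) :
  cell_in X (id1 P) (comp k R) -> hcomp X (id2 k) = id2 k ->
  cell_in z Z (comp k h) ->
  z = vcomp (hcomp (id2 k) (hcomp (id2 R) z)) (hcomp X (id2 Z)).
Proof.
  intros [HX1 HX2] HXk [Hz1 Hz2].
  rewrite whisker_l_comp, <- HX2, <- Hz1, <- hcomp_whisker_r_first,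
    hcomp_whisker_l_first, HX1, Hz2, hcomp_id_l, <- hcomp_id2, hcomp_assoc, HXk,
    hcomp_id2, vcomp_id_l_eq; auto.
Qed.

Lemma whisker_l_cancel {P b y} (k : Hom (t:=A) b P) (R : Hom P b) (X : Cell P P)
  (Z : Hom y P) (h : Hom y b) (z z' : Cell y P) :
  cell_in X (id1 P) (comp k R) -> hcomp X (id2 k) = id2 k ->
  cell_in z Z (comp k h) -> cell_in z' Z (comp k h) ->
  hcomp (id2 R) z = hcomp (id2 R) z' -> z = z'.
Proof.
  intros HX HXk Hz Hz' E.
  rewrite (cell_factor_through_unit k R X Z h z),
    (cell_factor_through_unit k R X Z h z'), E; auto.
Qed.

Lemma right_kan_cell_unique {a c d} (f : Hom (t:=A) a d) (g : Hom a c) (r : Hom c d)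
  (ga : Cell a d) (k : Hom c d) (b1 b2 : Cell c d) :
  is_right_kan f g r ga -> cell_in b1 k r -> cell_in b2 k r ->
  vcomp ga (hcomp b1 (id2 g)) = vcomp ga (hcomp b2 (id2 g)) -> b1 = b2.
Proof.
  intros [Hga HK] H1 H2 E.
  destruct (HK k (vcomp ga (hcomp b1 (id2 g)))) as [x [_ Hu]]; [cell_typing |].
  rewrite <- (Hu b1), <- (Hu b2); auto.
Qed.

End TwoCatFacts.

Section CodensityMonadLaws.
Context {A : TwoCat} {e b : Ob A} (p : Hom e b).
Variables (t : Hom b b) (ga : Cell e b) (m et : Cell b b).
Hypothesis Hcod : is_codensity_monad p t ga m et.

Let Hkan : is_right_kan p p t ga := proj1 Hcod.
Let Hga : cell_in ga (comp t p) p := proj1 (proj1 Hcod).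
Let Hm : cell_in m (comp t t) t := proj1 (proj2 Hcod).
Let Hmga : vcomp ga (hcomp m (id2 p)) = vcomp ga (hcomp (id2 t) ga) :=
  proj1 (proj2 (proj2 Hcod)).
Let Het : cell_in et (id1 b) t := proj1 (proj2 (proj2 (proj2 Hcod))).
Let Hetga : vcomp ga (hcomp et (id2 p)) = id2 p := proj2 (proj2 (proj2 (proj2 Hcod))).

Lemma codensity_unit_l : vcomp m (hcomp et (id2 t)) = id2 t.
Proof.
  apply (right_kan_cell_unique p p t ga t); [exact Hkan | cell_typing | cell_typing |].
  rewrite whisker_r_vcomp by side_cond. rewrite (vcompA ga) by side_cond.
  rewrite Hmga, whisker_r_comp, <- (vcompA ga) by side_cond.
  rewrite (naturality_from_id et t ga (comp t p) p) by auto.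
  rewrite (vcompA ga) by side_cond. rewrite Hetga, hcomp_id2.
  rewrite vcomp_id_l_eq, vcomp_id_r_eq; auto; side_cond.
Qed.

Lemma codensity_unit_r : vcomp m (hcomp (id2 t) et) = id2 t.
Proof.
  apply (right_kan_cell_unique p p t ga t); [exact Hkan | cell_typing | cell_typing |].
  rewrite whisker_r_vcomp by side_cond. rewrite (vcompA ga) by side_cond.
  rewrite Hmga, <- hcompA, <- (vcompA ga) by side_cond.
  rewrite <- whisker_l_vcomp by side_cond. rewrite Hetga, !hcomp_id2.
  rewrite vcomp_id_r_eq; auto; side_cond.
Qed.

Lemma codensity_assoc : vcomp m (hcomp (id2 t) m) = vcomp m (hcomp m (id2 t)).
Proof.
  apply (right_kan_cell_unique p p t ga (comp t (comp t t)));
    [exact Hkan | cell_typing | cell_typing |].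
  rewrite !whisker_r_vcomp by side_cond. rewrite !(vcompA ga) by side_cond.
  rewrite !Hmga, <- !(vcompA ga) by side_cond.
  rewrite <- (hcompA (id2 t) m (id2 p)), <- (whisker_l_vcomp t ga) by side_cond.
  rewrite Hmga, whisker_l_vcomp by side_cond.
  rewrite (whisker_r_comp m t p), <- (whisker_exchange m ga (comp t t) t (comp t p) p)
    by auto.
  rewrite (vcompA ga (hcomp m (id2 p))) by side_cond.
  rewrite Hmga, <- (vcompA ga (hcomp (id2 t) ga)) by side_cond.
  rewrite whisker_l_comp. reflexivity.
Qed.

End CodensityMonadLaws.

Section FreeAlgebraAdjunction.
Context {A : TwoCat} {b : Ob A}.
Variables (t : Hom b b) (m et : Cell b b).
Hypotheses (Hm : cell_in m (comp t t) t) (Het : cell_in et (id1 b) t).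
Hypothesis Hunit_l : vcomp m (hcomp et (id2 t)) = id2 t.
Hypothesis Hunit_r : vcomp m (hcomp (id2 t) et) = id2 t.
Hypothesis Hassoc : vcomp m (hcomp (id2 t) m) = vcomp m (hcomp m (id2 t)).
Variables (bT : Ob A) (u : Hom bT b) (mu : Cell bT b).
Hypothesis HEM : is_EM_object t m et u mu.

Lemma EM_object_alg : is_alg t m et u mu.
Proof.
  destruct HEM as [_ Hu]. destruct (Hu bT) as [H1 _].
  specialize (H1 (id1 bT)). rewrite comp_id_r, hcomp_id_r in H1. exact H1.
Qed.

Lemma EM_free_adjunction : exists (f : Hom b bT) (epsu : Cell bT bT),
  comp u f = t /\ is_adjunction f u et epsu.
Proof.
  destruct EM_object_alg as [Hmu [Hmu_assoc Hmu_unit]].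
  destruct HEM as [_ Hu].
  destruct (Hu b) as [_ [Hmor_b [Hobj_b Hcell_b]]].
  destruct (Hobj_b t m) as [f [[Huf Hmuf] _]]; [split; [cell_typing | auto] |].
  destruct (Hu bT) as [_ [_ [_ Hcell_bT]]].
  destruct (Hcell_bT (comp f u) (id1 bT) mu) as [epsu [[Hepsu Hepsu2] _]].
  { split; [cell_typing |].
    rewrite <- whisker_r_comp, Hmuf, hcomp_id_r. symmetry; exact Hmu_assoc. }
  exists f, epsu. split; [exact Huf |].
  split; [cell_typing |]. split; [exact Hepsu |]. split.
  - destruct (Hcell_b f f (hcomp (id2 u) (id2 f))) as [x [_ Hx]];
      [apply Hmor_b, cell_in_id2 |].
    transitivity x; [symmetry |]; apply Hx; split; try cell_typing; [| reflexivity].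
    rewrite whisker_l_vcomp by side_cond.
    rewrite whisker_l_comp, hcompA, Hepsu2, Hmuf, (id2_congr _ _ Huf), Hunit_r,
      hcomp_id2, (id2_congr _ _ Huf).
    reflexivity.
  - rewrite Hepsu2. exact Hmu_unit.
Qed.

End FreeAlgebraAdjunction.

Section AdjunctionEquivalence.
Context {A : TwoCat} {e b bT : Ob A}.
Variables (f : Hom b bT) (u : Hom bT b) (et : Cell b b) (epsu : Cell bT bT).
Hypothesis Hadj : is_adjunction f u et epsu.

Let Het : cell_in et (id1 b) (comp u f) := proj1 Hadj.
Let Hepsu : cell_in epsu (comp f u) (id1 bT) := proj1 (proj2 Hadj).
Let Htri_f : vcomp (hcomp epsu (id2 f)) (hcomp (id2 f) et) = id2 f :=
  proj1 (proj2 (proj2 Hadj)).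
Let Htri_u : vcomp (hcomp (id2 u) epsu) (hcomp et (id2 u)) = id2 u :=
  proj2 (proj2 (proj2 Hadj)).

Lemma adjunction_transpose_inv {Y : Hom b bT} (z : Cell b bT) : cell_in z f Y ->
  z = vcomp (hcomp epsu (id2 Y)) (hcomp (id2 f) (vcomp (hcomp (id2 u) z) et)).
Proof.
  intros Hz.
  rewrite whisker_l_vcomp by side_cond.
  rewrite whisker_l_comp, (vcompA (hcomp epsu (id2 Y))) by side_cond.
  rewrite (naturality_to_id epsu (comp f u) z f Y) by auto.
  rewrite <- (vcompA z) by side_cond. rewrite Htri_f, vcomp_id_r_eq; auto. side_cond.
Qed.

Lemma adjunction_transpose_inj {Y : Hom b bT} (z1 z2 : Cell b bT) :
  cell_in z1 f Y -> cell_in z2 f Y ->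
  vcomp (hcomp (id2 u) z1) et = vcomp (hcomp (id2 u) z2) et -> z1 = z2.
Proof.
  intros H1 H2 E.
  rewrite (adjunction_transpose_inv (Y := Y) z1), (adjunction_transpose_inv (Y := Y) z2), E;
    auto.
Qed.

Variables (pT : Hom e bT) (q : Hom bT e) (th1 th1i : Cell e e) (th2 th2i : Cell bT bT).
Hypotheses (Hth1 : cell_in th1 (comp q pT) (id1 e)) (Hth1i : cell_in th1i (id1 e) (comp q pT))
  (Eth1 : vcomp th1 th1i = id2 (id1 e)).
Hypotheses (Hth2 : cell_in th2 (comp pT q) (id1 bT)) (Hth2i : cell_in th2i (id1 bT) (comp pT q))
  (Eth2 : vcomp th2i th2 = id2 (comp pT q)).

Let l := comp q f.
Let p := comp u pT.

(* [pT_iso] is an invertible cell [pT => pT] correcting for the equivalence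
   [(pT, q)] not being adjoint. *)
Let pT_iso := vcomp (hcomp th2 (id2 pT)) (hcomp (id2 pT) th1i).
Let counit_core := vcomp pT_iso (hcomp epsu (id2 pT)).
Definition composite_unit := vcomp (hcomp (id2 u) (hcomp th2i (id2 f))) et.
Definition composite_counit := vcomp th1 (hcomp (id2 q) counit_core).

Let Hiso : cell_in pT_iso pT pT.
Proof. unfold pT_iso. cell_typing. Qed.
Let Hcore : cell_in counit_core (comp (comp f u) pT) pT.
Proof. unfold counit_core. cell_typing. Qed.
Let Hunit : cell_in composite_unit (id1 b) (comp p l).
Proof. unfold composite_unit, p, l. cell_typing. Qed.
Let Hcounit : cell_in composite_counit (comp l p) (id1 e).
Proof. unfold composite_counit, p, l. cell_typing. Qed.

Let pT_iso_inv :
  vcomp (hcomp (id2 pT) th1) (vcomp (hcomp th2i (id2 pT)) pT_iso) = id2 pT.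
Proof.
  unfold pT_iso. rewrite (vcompA (hcomp th2i (id2 pT))) by side_cond.
  rewrite <- whisker_r_vcomp by side_cond. rewrite Eth2, hcomp_id2, vcomp_id_l_eq by side_cond.
  rewrite <- whisker_l_vcomp by side_cond. rewrite Eth1, hcomp_id2, comp_id_r. reflexivity.
Qed.

Let composite_triangle_r :
  vcomp (hcomp (id2 p) composite_counit) (hcomp composite_unit (id2 p)) = id2 p.
Proof.
  unfold p.
  assert (E1 : hcomp (id2 (comp u pT)) composite_counit =
     hcomp (id2 u) (vcomp (hcomp (id2 pT) th1) (hcomp (id2 (comp pT q)) counit_core))).
  { unfold composite_counit.
    rewrite <- whisker_l_comp, (whisker_l_vcomp pT) by side_cond.
    rewrite whisker_l_comp. reflexivity. }
  assert (E2 : hcomp composite_unit (id2 (comp u pT)) =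
     vcomp (hcomp (id2 u) (hcomp th2i (id2 (comp f (comp u pT)))))
       (hcomp et (id2 (comp u pT)))).
  { unfold composite_unit. rewrite whisker_r_vcomp by side_cond.
    rewrite <- hcompA, whisker_r_comp. reflexivity. }
  rewrite E1, E2. clear E1 E2.
  rewrite (vcompA (hcomp (id2 u) _)) by side_cond. rewrite <- whisker_l_vcomp by side_cond.
  rewrite <- (vcompA (hcomp (id2 pT) th1)) by side_cond.
  rewrite (naturality_from_id th2i (comp pT q) counit_core (comp f (comp u pT)) pT)
    by (auto; cell_typing).
  unfold counit_core. rewrite (vcompA (hcomp th2i (id2 pT))) by side_cond.
  rewrite (vcompA (hcomp (id2 pT) th1)) by side_cond.
  rewrite pT_iso_inv, vcomp_id_l_eq by side_cond.
  rewrite hcompA, <- whisker_r_comp, <- whisker_r_vcomp by side_cond.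
  rewrite Htri_u. apply hcomp_id2.
Qed.

Let composite_triangle_l :
  vcomp (hcomp composite_counit (id2 l)) (hcomp (id2 l) composite_unit) = id2 l.
Proof.
  set (sg := vcomp (hcomp composite_counit (id2 l)) (hcomp (id2 l) composite_unit)).
  assert (Hsg : cell_in sg l l) by (unfold sg; cell_typing).
  assert (E1 : vcomp (hcomp (id2 p) sg) composite_unit = composite_unit).
  { unfold sg. rewrite whisker_l_vcomp by side_cond. rewrite whisker_l_comp.
    rewrite <- (vcompA (hcomp (id2 p) _)) by side_cond.
    assert (Hnat : vcomp (hcomp (id2 (comp p l)) composite_unit) composite_unit
                   = vcomp (hcomp composite_unit (id2 (comp p l))) composite_unit).
    { rewrite <- (naturality_from_id composite_unit (comp p l) composite_unit (id1 b))
        by auto.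
      rewrite hcomp_id_r. reflexivity. }
    rewrite Hnat.
    rewrite hcompA, <- (whisker_r_comp composite_unit p l),
      (vcompA (hcomp (hcomp (id2 p) composite_counit) (id2 l))) by side_cond.
    rewrite <- whisker_r_vcomp by side_cond.
    rewrite composite_triangle_r, hcomp_id2, vcomp_id_l_eq by side_cond. reflexivity. }
  assert (E2 : vcomp (hcomp (id2 pT) sg) (hcomp th2i (id2 f)) = hcomp th2i (id2 f)).
  { apply (adjunction_transpose_inj (Y := comp pT l)); try cell_typing.
    rewrite whisker_l_vcomp by side_cond.
    rewrite <- (vcompA (hcomp (id2 u) (hcomp (id2 pT) sg))) by side_cond.
    fold composite_unit. rewrite whisker_l_comp. exact E1. }
  assert (E3 : hcomp (id2 pT) sg = id2 (comp pT l)).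
  { transitivity (vcomp (hcomp (id2 pT) sg) (hcomp (vcomp th2i th2) (id2 f))).
    - rewrite Eth2, hcomp_id2. rewrite vcomp_id_r_eq; [reflexivity | side_cond].
    - rewrite whisker_r_vcomp by side_cond.
      rewrite (vcompA (hcomp (id2 pT) sg)) by side_cond. rewrite E2.
      rewrite <- whisker_r_vcomp by side_cond. rewrite Eth2, hcomp_id2.
      apply id2_congr; unfold l; hom_eq. }
  rewrite <- (vcomp_id_r_eq sg l) by side_cond.
  rewrite <- (hcomp_id_l _ _ _ (id2 l)), <- Eth1, whisker_r_vcomp by side_cond.
  rewrite (vcompA sg) by side_cond.
  rewrite <- (naturality_to_id th1 (comp q pT) sg l l) by auto.
  rewrite <- whisker_l_comp, E3, hcomp_id2.
  rewrite vcomp_id_r_eq by side_cond. rewrite <- whisker_r_vcomp by side_cond.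
  rewrite Eth1. reflexivity.
Qed.

Lemma adjunction_comp_equivalence :
  is_adjunction (comp q f) (comp u pT) composite_unit composite_counit.
Proof.
  split; [exact Hunit |]. split; [exact Hcounit |].
  split; [exact composite_triangle_l | exact composite_triangle_r].
Qed.

End AdjunctionEquivalence.

Lemma has_left_adjoint_comp_equivalence {A : TwoCat} {e b bT : Ob A}
  (u : Hom bT b) (pT : Hom e bT) :
  has_left_adjoint u -> is_equivalence pT -> has_left_adjoint (comp u pT).
Proof.
  intros [f [et [epsu Hadj]]]
    [q [th1 [th2 [[Hth1 [th1i [Hth1i [_ Eth1]]]] [Hth2 [th2i [Hth2i [Eth2 _]]]]]]]].
  eexists _, _, _.
  exact (adjunction_comp_equivalence f u et epsu Hadj pT q th1 th1i th2 th2i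
           Hth1 Hth1i Eth1 Hth2 Hth2i Eth2).
Qed.

Lemma codensity_monad_of_adjunction {A : TwoCat} {e b : Ob A} (p : Hom e b)
  (l : Hom b e) (eta : Cell b b) (eps : Cell e e) :
  is_adjunction l p eta eps ->
  is_codensity_monad p (comp p l) (hcomp (id2 p) eps)
    (hcomp (hcomp (id2 p) eps) (id2 l)) eta.
Proof.
  intros [Heta [Heps [Htri_l Htri_r]]].
  split; [split |].
  - cell_typing.
  - intros k th Hth. exists (vcomp (hcomp th (id2 l)) (hcomp (id2 k) eta)). split.
    + split; [cell_typing |].
      rewrite whisker_r_vcomp by side_cond. rewrite <- !hcompA, !hcomp_id2.
      rewrite (vcompA (hcomp (id2 p) eps)) by side_cond.
      rewrite <- (whisker_exchange th eps (comp k p) p (comp l p) (id1 e)) by auto.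
      rewrite hcomp_id_r, <- (vcompA th) by side_cond.
      rewrite <- whisker_l_comp, <- whisker_l_vcomp by side_cond.
      rewrite Htri_r, hcomp_id2, vcomp_id_r_eq by side_cond. reflexivity.
    + intros be [Hbe E]. subst th.
      rewrite whisker_r_vcomp by side_cond.
      rewrite <- (vcompA (hcomp (hcomp (id2 p) eps) (id2 l))) by side_cond.
      rewrite whisker_r_comp, (whisker_exchange be eta k (comp p l) (id1 b) (comp p l)) by auto.
      rewrite hcomp_id_r, (vcompA (hcomp (hcomp (id2 p) eps) (id2 l))) by side_cond.
      rewrite <- hcompA, <- whisker_l_comp, <- whisker_l_vcomp by side_cond.
      rewrite Htri_l, hcomp_id2, vcomp_id_l_eq by side_cond. reflexivity.
  - split; [cell_typing |]. split; [| split; [cell_typing | exact Htri_r]].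
    rewrite whisker_r_comp, <- hcompA, <- whisker_l_vcomp by side_cond.
    rewrite <- (whisker_l_comp p l), (whisker_l_comp l p), <- whisker_l_vcomp by side_cond.
    f_equal.
    pose proof (whisker_exchange eps eps (comp l p) (id1 e) (comp l p) (id1 e) Heps Heps) as X.
    rewrite hcomp_id_r, hcomp_id_l in X. symmetry. exact X.
Qed.

Section Comparison.
Context {A : TwoCat} {e b : Ob A} (p : Hom e b) (K : CokData p).
Notation P := (ck_P p K). Notation d0 := (ck_d0 p K). Notation d1 := (ck_d1 p K).
Notation al := (ck_al p K). Notation Q := (ck_Q p K). Notation D0 := (ck_D0 p K).
Notation D1 := (ck_D1 p K). Notation D2 := (ck_D2 p K). Notation s0 := (ck_s0 p K).
Hypothesis HK : is_cokernel_diagram p K.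

Let Hop : is_opcomma p d0 d1 al := proj1 HK.
Let Hpo : is_2pushout d0 d1 D2 D0 := proj1 (proj2 HK).
Let Hal : cell_in al (comp d1 p) (comp d0 p) := proj1 Hop.
Let HD20 : comp D2 d0 = comp D0 d1 := proj1 Hpo.
Let HD11 : comp D1 d1 = comp D2 d1 := proj1 (proj1 (proj2 (proj2 HK))).
Let HD10 : comp D1 d0 = comp D0 d0 := proj1 (proj2 (proj1 (proj2 (proj2 HK)))).
Let HD1a : hcomp (id2 D1) al = vcomp (hcomp (id2 D0) al) (hcomp (id2 D2) al) :=
  proj2 (proj2 (proj1 (proj2 (proj2 HK)))).
Let Hs00 : comp s0 d0 = id1 b := proj1 (proj2 (proj2 (proj2 HK))).
Let Hs01 : comp s0 d1 = id1 b := proj1 (proj2 (proj2 (proj2 (proj2 HK)))).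
Let Hs0a : hcomp (id2 s0) al = id2 p := proj2 (proj2 (proj2 (proj2 (proj2 HK)))).

Variables (t : Hom b b) (ga : Cell e b) (m et : Cell b b).
Hypothesis Hcod : is_codensity_monad p t ga m et.

Let Hkan : is_right_kan p p t ga := proj1 Hcod.
Let Hga : cell_in ga (comp t p) p := proj1 (proj1 Hcod).
Let Hm : cell_in m (comp t t) t := proj1 (proj2 Hcod).
Let Hmga : vcomp ga (hcomp m (id2 p)) = vcomp ga (hcomp (id2 t) ga) :=
  proj1 (proj2 (proj2 Hcod)).
Let Het : cell_in et (id1 b) t := proj1 (proj2 (proj2 (proj2 Hcod))).
Let Hetga : vcomp ga (hcomp et (id2 p)) = id2 p := proj2 (proj2 (proj2 (proj2 Hcod))).

Variables (l : Hom b e) (eta : Cell b b) (eps : Cell e e).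
Hypothesis Hadj : is_adjunction l p eta eps.

Let Heta : cell_in eta (id1 b) (comp p l) := proj1 Hadj.
Let Heps : cell_in eps (comp l p) (id1 e) := proj1 (proj2 Hadj).
Let Htri_r : vcomp (hcomp (id2 p) eps) (hcomp eta (id2 p)) = id2 p :=
  proj2 (proj2 (proj2 Hadj)).

Definition desc_of_alg (ka : Cell b P) {y} (h : Hom y b) (be : Cell y b) : Cell y P :=
  vcomp (hcomp (id2 d0) be) (hcomp ka (id2 h)).

Lemma desc_of_alg_whisker (ka : Cell b P) {bT y} (u : Hom bT b) (mu : Cell bT b)
  (g : Hom y bT) :
  cell_in ka d1 (comp d0 t) -> cell_in mu (comp t u) u ->
  hcomp (desc_of_alg ka u mu) (id2 g) = desc_of_alg ka (comp u g) (hcomp mu (id2 g)).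
Proof.
  intros Hka Hmu. unfold desc_of_alg.
  rewrite whisker_r_vcomp by side_cond. rewrite <- !hcompA, hcomp_id2. reflexivity.
Qed.

Lemma counit_kan_factor_exists : exists phi : Cell b b,
  cell_in phi (comp p l) t /\ vcomp ga (hcomp phi (id2 p)) = hcomp (id2 p) eps.
Proof.
  destruct (proj2 Hkan (comp p l) (hcomp (id2 p) eps)) as [phi [Hphi _]];
    [cell_typing | exists phi; exact Hphi].
Qed.

Lemma comparison_map_exists : exists r : Hom P b,
  comp r d0 = id1 b /\ comp r d1 = t /\ hcomp (id2 r) al = ga.
Proof.
  destruct (proj1 (proj2 Hop b) (id1 b) t ga) as [r [Hr _]];
    [cell_typing | exists r; exact Hr].
Qed.

Lemma counit_kan_triangle : vcomp (hcomp (id2 p) eps)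
  (vcomp (hcomp ga (id2 (comp l p))) (hcomp (id2 t) (hcomp eta (id2 p)))) = ga.
Proof.
  rewrite (vcompA (hcomp (id2 p) eps)) by side_cond.
  rewrite <- (whisker_exchange ga eps (comp t p) p (comp l p) (id1 e)) by side_cond.
  rewrite hcomp_id_r, <- (vcompA ga) by side_cond.
  rewrite <- whisker_l_comp, <- whisker_l_vcomp by side_cond. rewrite Htri_r, hcomp_id2.
  apply vcomp_id_r_eq. side_cond.
Qed.

Section Witnesses.
Variable phi : Cell b b.
Hypotheses (Hphi : cell_in phi (comp p l) t)
  (Hphi2 : vcomp ga (hcomp phi (id2 p)) = hcomp (id2 p) eps).

(* The transpose of [al] along the adjunction, corrected by [phi] to land in [d0 t]. *)
Definition kappa : Cell b P :=
  vcomp (hcomp (id2 d0) phi) (vcomp (hcomp al (id2 l)) (hcomp (id2 d1) eta)).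

Let mk {y} := @desc_of_alg kappa y.

Lemma kappa_cell_in : cell_in kappa d1 (comp d0 t).
Proof. unfold kappa. cell_typing. Qed.

Lemma kappa_alpha : vcomp (hcomp (id2 d0) ga) (hcomp kappa (id2 p)) = al.
Proof.
  unfold kappa. rewrite !whisker_r_vcomp by side_cond.
  rewrite <- !hcompA, !hcomp_id2, (vcompA (hcomp (id2 d0) ga)) by side_cond.
  rewrite <- whisker_l_vcomp by side_cond. rewrite Hphi2, whisker_l_comp.
  rewrite (vcompA (hcomp (id2 (comp d0 p)) eps)) by side_cond.
  rewrite <- (whisker_exchange al eps (comp d1 p) (comp d0 p) (comp l p) (id1 e))
    by side_cond.
  rewrite hcomp_id_r, <- (vcompA al) by side_cond.
  rewrite <- whisker_l_comp, <- whisker_l_vcomp by side_cond. rewrite Htri_r, hcomp_id2.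
  apply vcomp_id_r_eq. side_cond.
Qed.

Lemma s0_kappa : hcomp (id2 s0) kappa = et.
Proof.
  assert (E : hcomp (id2 s0) kappa = vcomp phi eta).
  { unfold kappa. rewrite !whisker_l_vcomp by side_cond.
    rewrite !whisker_l_comp, hcompA, Hs0a, (id2_congr _ _ Hs00), (id2_congr _ _ Hs01),
      !hcomp_id_l, hcomp_id2, vcomp_id_l_eq; [reflexivity | side_cond]. }
  rewrite E. apply (right_kan_cell_unique p p t ga (id1 b));
    [exact Hkan | cell_typing | cell_typing |].
  rewrite whisker_r_vcomp by side_cond. rewrite (vcompA ga) by side_cond.
  rewrite Hphi2, Htri_r, Hetga. reflexivity.
Qed.

Variable r : Hom P b.
Hypotheses (Hr0 : comp r d0 = id1 b) (Hr1 : comp r d1 = t) (Hra : hcomp (id2 r) al = ga).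

Lemma r_kappa : hcomp (id2 r) kappa = id2 t.
Proof.
  assert (E : hcomp (id2 r) kappa
              = vcomp phi (vcomp (hcomp ga (id2 l)) (hcomp (id2 t) eta))).
  { unfold kappa. rewrite !whisker_l_vcomp by side_cond.
    rewrite !whisker_l_comp, hcompA, Hra, (id2_congr _ _ Hr0), (id2_congr _ _ Hr1),
      hcomp_id_l.
    reflexivity. }
  apply (right_kan_cell_unique p p t ga t); [exact Hkan | rewrite E; cell_typing
    | cell_typing |].
  rewrite E, !whisker_r_vcomp by side_cond. rewrite <- !hcompA, !hcomp_id2.
  rewrite (vcompA ga) by side_cond. rewrite Hphi2, counit_kan_triangle.
  rewrite vcomp_id_r_eq; [reflexivity | side_cond].
Qed.

Lemma comparison_map_ext_exists : exists R : Hom Q b, comp R D2 = comp t r /\ comp R D0 = r.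
Proof.
  destruct (proj1 (proj2 Hpo b) (comp t r) r) as [R [HR _]];
    [hom_eq | exists R; exact HR].
Qed.

Variable R : Hom Q b.
Hypotheses (HR0 : comp R D0 = r) (HR2 : comp R D2 = comp t r).

Lemma R_D1_kappa : hcomp (id2 (comp R D1)) kappa = m.
Proof.
  assert (E1 : hcomp (id2 (comp R D1)) al = vcomp ga (hcomp (id2 t) ga)).
  { rewrite <- whisker_l_comp, HD1a, whisker_l_vcomp by side_cond.
    rewrite !whisker_l_comp, HR0, Hra, HR2, <- whisker_l_comp, Hra. reflexivity. }
  assert (E2 : hcomp (id2 (comp R D1)) kappa =
    vcomp phi (vcomp (hcomp (vcomp ga (hcomp (id2 t) ga)) (id2 l))
       (hcomp (id2 (comp t t)) eta))).
  { unfold kappa. rewrite !whisker_l_vcomp by side_cond.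
    rewrite !whisker_l_comp, hcompA, E1.
    rewrite (id2_congr (comp (comp R D1) d0) (id1 b)) by hom_eq.
    rewrite (id2_congr (comp (comp R D1) d1) (comp t t)) by hom_eq.
    rewrite hcomp_id_l. reflexivity. }
  rewrite E2. apply (right_kan_cell_unique p p t ga (comp t t));
    [exact Hkan | cell_typing | cell_typing |].
  rewrite Hmga, !whisker_r_vcomp by side_cond. rewrite <- !hcompA, !hcomp_id2.
  rewrite (vcompA ga) by side_cond. rewrite Hphi2.
  rewrite <- (vcompA (hcomp ga (id2 (comp l p)))) by side_cond.
  rewrite (vcompA (hcomp (id2 p) eps)) by side_cond.
  rewrite <- (whisker_exchange ga eps (comp t p) p (comp l p) (id1 e)) by side_cond.
  rewrite hcomp_id_r, <- (vcompA ga) by side_cond. f_equal.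
  rewrite <- (whisker_l_comp t p eps), <- (whisker_l_comp t t (hcomp eta (id2 p))).
  rewrite <- !whisker_l_vcomp by side_cond. rewrite counit_kan_triangle. reflexivity.
Qed.

(* [X0] and [X] make whiskering by [r], resp. [R], cancellable on cells into [d0 h],
   resp. [D0 d0 h] (by [whisker_l_cancel]): this is how the cocycle condition and the
   descent morphisms are read off from their images under [r]. *)
Lemma unit_d0_r_exists : exists X0 : Cell P P,
  cell_in X0 (id1 P) (comp d0 r) /\ hcomp X0 (id2 d0) = id2 d0 /\
  hcomp X0 (id2 d1) = kappa.
Proof.
  pose proof kappa_cell_in.
  destruct (proj2 (proj2 Hop P) (id1 P) (comp d0 r) (id2 d0) kappa)
    as [X0 [HX0 _]]; [cell_typing | cell_typing | | exists X0; exact HX0].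
  rewrite hcomp_id2, hcomp_id_l, vcomp_id_l_eq by side_cond.
  rewrite <- whisker_l_comp, Hra, kappa_alpha. reflexivity.
Qed.

Variable X0 : Cell P P.
Hypotheses (HX0 : cell_in X0 (id1 P) (comp d0 r)) (HX0a : hcomp X0 (id2 d0) = id2 d0)
  (HX0b : hcomp X0 (id2 d1) = kappa).

Lemma unit_D0d0_R_exists : exists X : Cell Q Q,
  cell_in X (id1 Q) (comp (comp D0 d0) R) /\
  hcomp X (id2 (comp D0 d0)) = id2 (comp D0 d0).
Proof.
  pose proof kappa_cell_in.
  destruct (proj2 (proj2 Hpo Q) (id1 Q) (comp (comp D0 d0) R)
     (vcomp (hcomp (id2 D0) (hcomp kappa (id2 r))) (hcomp (id2 D2) X0))
     (hcomp (id2 D0) X0)) as [X [[HX [HXa HXb]] _]]; [cell_typing | cell_typing | |].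
  - rewrite whisker_r_vcomp by side_cond. rewrite <- !hcompA, HX0a, HX0b, !hcomp_id2.
    rewrite (id2_congr _ _ Hr0), hcomp_id_r, vcomp_id_r_eq; [reflexivity | side_cond].
  - exists X. split; [exact HX |].
    rewrite <- whisker_r_comp, HXb, <- hcompA, HX0a, hcomp_id2. reflexivity.
Qed.

Variable X : Cell Q Q.
Hypotheses (HX : cell_in X (id1 Q) (comp (comp D0 d0) R))
  (HXa : hcomp X (id2 (comp D0 d0)) = id2 (comp D0 d0)).

Lemma desc_of_alg_r {y} (h : Hom y b) z : cell_in z (comp d1 h) (comp d0 h) ->
  z = mk h (hcomp (id2 r) z).
Proof.
  intros Hz. unfold mk, desc_of_alg. rewrite <- HX0b, whisker_r_comp.
  apply (cell_factor_through_unit d0 r X0 (comp d1 h) h z); auto.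
Qed.

Lemma desc_of_alg_cell_in {y} (h : Hom y b) be : cell_in be (comp t h) h ->
  cell_in (mk h be) (comp d1 h) (comp d0 h).
Proof. intros. pose proof kappa_cell_in. unfold mk, desc_of_alg. cell_typing. Qed.

Lemma r_desc_of_alg {y} (h : Hom y b) be : cell_in be (comp t h) h ->
  hcomp (id2 r) (mk h be) = be.
Proof.
  intros Hb. pose proof kappa_cell_in. unfold mk, desc_of_alg.
  rewrite whisker_l_vcomp by side_cond.
  rewrite whisker_l_comp, hcompA, r_kappa, hcomp_id2, (id2_congr _ _ Hr0), hcomp_id_l.
  apply vcomp_id_r_eq. side_cond.
Qed.

Lemma R_D1_desc {y} (h : Hom y b) z : cell_in z (comp d1 h) (comp d0 h) ->
  hcomp (id2 R) (hcomp (id2 D1) z) = vcomp (hcomp (id2 r) z) (hcomp m (id2 h)).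
Proof.
  intros Hz. pose proof kappa_cell_in.
  rewrite whisker_l_comp, (desc_of_alg_r h z) at 1 by auto. unfold mk, desc_of_alg.
  rewrite whisker_l_vcomp by side_cond.
  rewrite whisker_l_comp, (hcompA (id2 (comp R D1)) kappa), R_D1_kappa.
  rewrite (id2_congr (comp (comp R D1) d0) (id1 b)) by hom_eq.
  rewrite hcomp_id_l. reflexivity.
Qed.

Lemma desc_iff_alg {y} (h : Hom y b) z : cell_in z (comp d1 h) (comp d0 h) ->
  (is_desc K h z <-> is_alg t m et h (hcomp (id2 r) z)).
Proof.
  intros Hz. pose proof kappa_cell_in.
  assert (Hs : hcomp (id2 s0) z = vcomp (hcomp (id2 r) z) (hcomp et (id2 h))).
  { rewrite (desc_of_alg_r h z) at 1 by auto. unfold mk, desc_of_alg.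
    rewrite whisker_l_vcomp by side_cond.
    rewrite whisker_l_comp, (hcompA (id2 s0) kappa), s0_kappa, (id2_congr _ _ Hs00),
      hcomp_id_l.
    reflexivity. }
  assert (HRD : hcomp (id2 R)
                  (vcomp (hcomp (id2 D0) z) (hcomp (id2 D2) z))
                = vcomp (hcomp (id2 r) z) (hcomp (id2 t) (hcomp (id2 r) z))).
  { rewrite whisker_l_vcomp by side_cond.
    rewrite !whisker_l_comp, HR0, HR2, <- whisker_l_comp. reflexivity. }
  unfold is_desc, is_alg. rewrite Hs. split.
  - intros [_ [Hcocycle Hnorm]]. split; [cell_typing |]. split; [| exact Hnorm].
    rewrite <- HRD, Hcocycle, (R_D1_desc h z Hz). reflexivity.
  - intros [_ [Hassoc Hunit]]. split; [exact Hz |]. split; [| exact Hunit].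
    apply (whisker_l_cancel (comp D0 d0) R X (comp D2 (comp d1 h)) h);
      auto; try cell_typing.
    rewrite HRD, (R_D1_desc h z Hz). exact Hassoc.
Qed.

Lemma desc_mor_iff_alg_mor {y} (h1 h0 : Hom y b) z1 z0 x :
  cell_in z1 (comp d1 h1) (comp d0 h1) -> cell_in z0 (comp d1 h0) (comp d0 h0) ->
  (is_desc_mor K h1 z1 h0 z0 x <->
   is_alg_mor t h1 (hcomp (id2 r) z1) h0 (hcomp (id2 r) z0) x).
Proof.
  intros H1 H0. unfold is_desc_mor, is_alg_mor.
  split; intros [Hx E]; split; auto.
  - apply (f_equal (hcomp (id2 r))) in E. rewrite !whisker_l_vcomp in E by side_cond.
    rewrite !whisker_l_comp, (id2_congr _ _ Hr1), (id2_congr _ _ Hr0), hcomp_id_l in E.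
    symmetry; exact E.
  - apply (whisker_l_cancel d0 r X0 (comp d1 h1) h0); auto; try cell_typing.
    rewrite !whisker_l_vcomp by side_cond.
    rewrite !whisker_l_comp, (id2_congr _ _ Hr1), (id2_congr _ _ Hr0), hcomp_id_l.
    symmetry; exact E.
Qed.

Lemma desc_of_alg_is_desc {y} (h : Hom y b) be : is_alg t m et h be -> is_desc K h (mk h be).
Proof.
  intros Ha. assert (Hb : cell_in be (comp t h) h) by apply Ha.
  apply desc_iff_alg; [apply desc_of_alg_cell_in; exact Hb |].
  rewrite r_desc_of_alg; assumption.
Qed.

Lemma EM_object_of_lax_descent {L} (d : Hom L b) (Ps : Cell L P) :
  is_lax_descent K d Ps -> is_EM_object t m et d (hcomp (id2 r) Ps).
Proof.
  intros [HPs HL]. split; [cell_typing |]. intros y.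
  destruct (HL y) as [Hfun_obj [Hfun_mor [Hbij_obj Hbij_mor]]].
  assert (Hz : forall g : Hom y L,
    cell_in (hcomp Ps (id2 g)) (comp d1 (comp d g)) (comp d0 (comp d g)))
    by (intros; cell_typing).
  assert (Hrz : forall g : Hom y L,
    hcomp (hcomp (id2 r) Ps) (id2 g) = hcomp (id2 r) (hcomp Ps (id2 g)))
    by (intros; symmetry; apply hcompA).
  split; [| split; [| split]].
  - intros g. rewrite Hrz. apply desc_iff_alg; auto.
  - intros g g' x Hx. rewrite !Hrz. apply desc_mor_iff_alg_mor; auto.
  - intros h be Ha. assert (Hb : cell_in be (comp t h) h) by apply Ha.
    destruct (Hbij_obj h (mk h be)) as [g [[E1 E2] U]]; [apply desc_of_alg_is_desc; auto |].
    exists g. split.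
    + split; auto. rewrite Hrz, E2, r_desc_of_alg; auto.
    + intros g' [E1' E2']. apply U. split; auto.
      rewrite (desc_of_alg_r (comp d g') (hcomp Ps (id2 g'))) by auto.
      rewrite <- Hrz, E2', E1'. reflexivity.
  - intros g g' x Hmor. apply Hbij_mor. rewrite !Hrz in Hmor.
    apply desc_mor_iff_alg_mor; auto.
Qed.

Lemma lax_descent_of_EM_object {bT} (u : Hom bT b) (mu : Cell bT b) :
  is_EM_object t m et u mu -> is_lax_descent K u (mk u mu).
Proof.
  intros [Hmu HE]. pose proof kappa_cell_in.
  assert (Hmk : cell_in (mk u mu) (comp d1 u) (comp d0 u))
    by (apply desc_of_alg_cell_in; exact Hmu).
  split; [exact Hmk |]. intros y.
  destruct (HE y) as [Hfun_obj [Hfun_mor [Hbij_obj Hbij_mor]]].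
  assert (Hrm : forall g : Hom y bT,
    hcomp (id2 r) (hcomp (mk u mu) (id2 g)) = hcomp mu (id2 g)).
  { intros g. unfold mk. rewrite desc_of_alg_whisker by auto.
    apply r_desc_of_alg. cell_typing. }
  split; [| split; [| split]].
  - intros g. unfold mk. rewrite desc_of_alg_whisker by auto.
    apply desc_of_alg_is_desc, Hfun_obj.
  - intros g g' x Hx. apply desc_mor_iff_alg_mor; try cell_typing.
    rewrite !Hrm. apply Hfun_mor; auto.
  - intros h z Hd. assert (Hz : cell_in z (comp d1 h) (comp d0 h)) by apply Hd.
    destruct (Hbij_obj h (hcomp (id2 r) z)) as [g [[G1 G2] U]];
      [apply desc_iff_alg; auto |].
    exists g. split.
    + split; auto. unfold mk. rewrite desc_of_alg_whisker, G2, G1 by auto.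
      symmetry. apply desc_of_alg_r; auto.
    + intros g' [G1' G2']. apply U. split; auto. rewrite <- Hrm, G2'. reflexivity.
  - intros g g' x Hd. apply Hbij_mor. rewrite <- !Hrm.
    apply desc_mor_iff_alg_mor; try cell_typing. exact Hd.
Qed.

End Witnesses.

Lemma descent_comparison : exists (r : Hom P b) (ka : Cell b P),
  hcomp (id2 r) al = ga /\ cell_in ka d1 (comp d0 t) /\
  vcomp (hcomp (id2 d0) ga) (hcomp ka (id2 p)) = al /\
  (forall L (d : Hom L b) (Ps : Cell L P),
     is_lax_descent K d Ps -> is_EM_object t m et d (hcomp (id2 r) Ps)) /\
  (forall bT (u : Hom bT b) (mu : Cell bT b),
     is_EM_object t m et u mu -> is_lax_descent K u (desc_of_alg ka u mu)).
Proof.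
  destruct counit_kan_factor_exists as [phi [Hphi Hphi2]].
  destruct comparison_map_exists as [r [Hr0 [Hr1 Hra]]].
  destruct (comparison_map_ext_exists r Hr0 Hr1) as [R [HR2 HR0]].
  destruct (unit_d0_r_exists phi Hphi Hphi2 r Hr0 Hr1 Hra) as [X0 [HX0 [HX0a HX0b]]].
  destruct (unit_D0d0_R_exists phi Hphi r Hr0 R HR0 HR2 X0 HX0 HX0a HX0b) as [X [HX HXa]].
  exists r, (kappa phi).
  split; [exact Hra |]. split; [apply kappa_cell_in; exact Hphi |].
  split; [apply kappa_alpha; assumption |].
  split; intros.
  - eapply EM_object_of_lax_descent; eassumption.
  - eapply lax_descent_of_EM_object; eassumption.
Qed.

End Comparison.

Section Monadicity.
Context {A : TwoCat} {e b : Ob A}.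

Lemma monadic_has_left_adjoint (p : Hom e b) : monadic p -> has_left_adjoint p.
Proof.
  intros [t [ga [m [et [Hcod [bT [u [mu [HEM [pT [Hp [_ Heqv]]]]]]]]]]]].
  pose proof Hcod as [_ [Hm [_ [Het _]]]].
  destruct (EM_free_adjunction t m et Hm Het
              (codensity_unit_l p t ga m et Hcod) (codensity_unit_r p t ga m et Hcod)
              (codensity_assoc p t ga m et Hcod) bT u mu HEM) as [f [epsu [_ Hadj]]].
  subst p. apply has_left_adjoint_comp_equivalence; [exists f, et, epsu |]; assumption.
Qed.

Lemma monadic_effective_faithful (p : Hom e b) :
  has_cokernel_diagram p -> monadic p -> effective_faithful p.
Proof.
  intros [K HK] Hmon.
  destruct (monadic_has_left_adjoint p Hmon) as [l [eta [eps Hadj]]].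
  destruct Hmon as [t [ga [m [et [Hcod [bT [u [mu [HEM [pT [Hp [Hmu Heqv]]]]]]]]]]]].
  destruct (descent_comparison p K HK t ga m et Hcod l eta eps Hadj)
    as [r [ka [_ [Hka [Hka_al [_ Hlax]]]]]].
  exists K. split; [exact HK |].
  exists bT, u, (desc_of_alg p K ka u mu). split; [exact (Hlax bT u mu HEM) |].
  exists pT. split; [exact Hp |]. split; [| exact Heqv].
  rewrite (desc_of_alg_whisker p K t ka u mu pT Hka (proj1 HEM)).
  unfold desc_of_alg. rewrite Hmu, (id2_congr _ _ Hp). exact Hka_al.
Qed.

Lemma effective_faithful_monadic (p : Hom e b) :
  has_left_adjoint p -> effective_faithful p -> monadic p.
Proof.
  intros [l [eta [eps Hadj]]] [K [HK [L [d [Ps [HL [pH [Hd [HPs Heqv]]]]]]]]].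
  pose proof (codensity_monad_of_adjunction p l eta eps Hadj) as Hcod.
  destruct (descent_comparison p K HK _ _ _ _ Hcod l eta eps Hadj)
    as [r [_ [Hra [_ [_ [HEM _]]]]]].
  eexists _, _, _, _. split; [exact Hcod |].
  exists L, d, (hcomp (id2 r) Ps). split; [exact (HEM L d Ps HL) |].
  exists pH. split; [exact Hd |]. split; [| exact Heqv].
  rewrite <- hcompA, HPs, Hra. reflexivity.
Qed.

Lemma monadic_iff (p : Hom e b) : has_cokernel_diagram p ->
  (monadic p <-> has_left_adjoint p /\ effective_faithful p).
Proof.
  intros HK. split.
  - intros Hmon. split; [apply monadic_has_left_adjoint | apply monadic_effective_faithful];
      assumption.
  - intros [Hl Hef]. apply effective_faithful_monadic; assumption.
Qed.

End Monadicity.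

Section Duality.
Context {A : TwoCat}.

(* Reversing 2-cells swaps the roles of [d0, d1] and of [D0, D2]. *)
Definition cokernel_data_co {e b : Ob A} {p : Hom e b} (K : CokData p) :
  @CokData (co A) e b p :=
  @Build_CokData (co A) e b p (ck_P p K) (ck_d1 p K) (ck_d0 p K) (ck_al p K)
     (ck_Q p K) (ck_D2 p K) (ck_D1 p K) (ck_D0 p K) (ck_s0 p K).

Lemma is_opcomma_co {e b P : Ob A} (p : Hom e b) (d0 d1 : Hom b P) (al : Cell e P) :
  is_opcomma p d0 d1 al -> @is_opcomma (co A) e b P p d1 d0 al.
Proof.
  unfold is_opcomma, cell_in. cbn. intros [[Ha1 Ha2] Hu]. split; [split; auto |].
  intros y. destruct (Hu y) as [Hobj Hmor]. split.
  - intros h0 h1 be [B1 B2].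
    destruct (Hobj h1 h0 be) as [h [[E1 [E2 E3]] U]]; [split; auto |].
    exists h. split; [auto |]. intros h' [F1 [F2 F3]]. apply U; auto.
  - intros h h' x0 x1 [X1 X2] [Y1 Y2] E.
    destruct (Hmor h' h x1 x0) as [x [[[F1 F2] [F3 F4]] U]];
      [split; auto | split; auto | auto |].
    exists x. split; [split; [split; auto | auto] |].
    intros x' [[G1 G2] [G3 G4]]. apply U. split; [split; auto | auto].
Qed.

Lemma is_2pushout_co {c c0 c1 Q : Ob A} (f0 : Hom c c0) (f1 : Hom c c1)
  (q0 : Hom c0 Q) (q1 : Hom c1 Q) :
  is_2pushout f0 f1 q0 q1 -> @is_2pushout (co A) c c1 c0 Q f1 f0 q1 q0.
Proof.
  unfold is_2pushout, cell_in. cbn. intros [E0 Hu]. split; [auto |].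
  intros y. destruct (Hu y) as [Hobj Hmor]. split.
  - intros k0 k1 E. destruct (Hobj k1 k0) as [k [[E1 E2] U]]; [auto |].
    exists k. split; [auto |]. intros k' [F1 F2]. apply U; auto.
  - intros k k' x0 x1 [X1 X2] [Y1 Y2] E.
    destruct (Hmor k' k x1 x0) as [x [[[F1 F2] [F3 F4]] U]];
      [split; auto | split; auto | auto |].
    exists x. split; [split; [split; auto | auto] |].
    intros x' [[G1 G2] [G3 G4]]. apply U. split; [split; auto | auto].
Qed.

Lemma is_cokernel_diagram_co {e b : Ob A} (p : Hom e b) (K : CokData p) :
  is_cokernel_diagram p K -> @is_cokernel_diagram (co A) e b p (cokernel_data_co K).
Proof.
  intros [Hop [Hpo [[H1 [H2 H3]] [H4 [H5 H6]]]]].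
  split; [apply (is_opcomma_co p _ _ _ Hop) |].
  split; [apply (is_2pushout_co _ _ _ _ Hpo) |].
  cbn. split; [split; [exact H2 | split; [exact H1 | exact H3]] |].
  split; [exact H5 | split; [exact H4 | exact H6]].
Qed.

Lemma is_desc_co {e b : Ob A} {p : Hom e b} (K : CokData p) {y} (h : Hom y b) be :
  @is_desc (co A) e b p (cokernel_data_co K) y h be <-> is_desc K h be.
Proof. unfold is_desc, cell_in. cbn. split; intros [[H1 H2] [H3 H4]]; auto. Qed.

Lemma is_desc_mor_co {e b : Ob A} {p : Hom e b} (K : CokData p) {y} (h1 : Hom y b)
  be1 h0 be0 x :
  @is_desc_mor (co A) e b p (cokernel_data_co K) y h1 be1 h0 be0 x <->
  is_desc_mor K h0 be0 h1 be1 x.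
Proof. unfold is_desc_mor, cell_in. cbn. split; intros [[H1 H2] H3]; auto. Qed.

Lemma is_lax_descent_co {e b : Ob A} {p : Hom e b} (K : CokData p) {L} (d : Hom L b) Ps :
  is_lax_descent K d Ps -> @is_lax_descent (co A) e b p (cokernel_data_co K) L d Ps.
Proof.
  intros [[HP1 HP2] HL]. split; [split; auto |].
  intros y. destruct (HL y) as [Hfun_obj [Hfun_mor [Hbij_obj Hbij_mor]]].
  split; [| split; [| split]].
  - intros g. apply is_desc_co, Hfun_obj.
  - intros g g' x [X1 X2]. apply is_desc_mor_co, Hfun_mor. split; auto.
  - intros h be Hd. apply is_desc_co in Hd.
    destruct (Hbij_obj h be Hd) as [g [G U]]. exists g. split; auto.
  - intros g g' x Hd. apply is_desc_mor_co in Hd.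
    destruct (Hbij_mor g' g x Hd) as [xi [[[G1 G2] G3] U]].
    exists xi. split; [split; [split; auto | auto] |].
    intros xi' [[F1 F2] F3]. apply U. split; [split; auto | auto].
Qed.

Lemma is_equivalence_co {a b : Ob A} (f : Hom a b) :
  is_equivalence f -> @is_equivalence (co A) a b f.
Proof.
  unfold is_equivalence, invertible, cell_in. cbn.
  intros [g [t1 [t2 [[[A1 A2] [t1' [[B1 B2] [C1 C2]]]]
                      [[D1 D2] [t2' [[E1 E2] [F1 F2]]]]]]]].
  exists g, t1', t2'. split.
  - split; [split; auto |]. exists t1. split; [split; auto | split; auto].
  - split; [split; auto |]. exists t2. split; [split; auto | split; auto].
Qed.

Lemma effective_faithful_co {e b : Ob A} (p : Hom e b) :
  effective_faithful p -> @effective_faithful (co A) e b p.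
Proof.
  intros [K [HK [L [d [Ps [HL [pH [H1 [H2 H3]]]]]]]]].
  exists (cokernel_data_co K). split; [apply is_cokernel_diagram_co; exact HK |].
  exists L, d, Ps. split; [apply is_lax_descent_co; exact HL |].
  exists pH. split; [exact H1 |]. split; [exact H2 |]. apply is_equivalence_co; exact H3.
Qed.

Lemma has_cokernel_diagram_co {e b : Ob A} (p : Hom e b) :
  has_cokernel_diagram p -> @has_cokernel_diagram (co A) e b p.
Proof. intros [K HK]. exists (cokernel_data_co K). apply is_cokernel_diagram_co, HK. Qed.

Lemma has_left_adjoint_co {e b : Ob A} (p : Hom e b) :
  @has_left_adjoint (co A) e b p <-> has_right_adjoint p.
Proof.
  unfold has_left_adjoint, has_right_adjoint, is_adjunction, cell_in. cbn.
  split; intros [l [et [ep [[H1 H2] [[H3 H4] [H5 H6]]]]]]; exists l, ep, et; auto 10.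
Qed.

End Duality.

(* [co (co A)] is only eta-equal to [A], so cokernel data are transported back by hand. *)
Definition cokernel_data_coco {A : TwoCat} {e b : Ob A} {p : Hom e b}
  (K : @CokData (co (co A)) e b p) : @CokData A e b p :=
  let B := co (co A) in
  @Build_CokData A e b p (@ck_P B e b p K) (@ck_d0 B e b p K) (@ck_d1 B e b p K)
     (@ck_al B e b p K) (@ck_Q B e b p K) (@ck_D0 B e b p K) (@ck_D1 B e b p K)
     (@ck_D2 B e b p K) (@ck_s0 B e b p K).

Lemma effective_faithful_co_iff {A : TwoCat} {e b : Ob A} (p : Hom e b) :
  @effective_faithful (co A) e b p <-> effective_faithful p.
Proof.
  split; [| apply effective_faithful_co].
  intros Hef. apply (effective_faithful_co (A := co A)) in Hef.
  destruct Hef as [K [HK [L [d [Ps [HL [pH [H1 [H2 H3]]]]]]]]].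
  exists (cokernel_data_coco K). split; [exact HK |].
  exists L, d, Ps. split; [exact HL |].
  exists pH. split; [exact H1 |]. split; [exact H2 | exact H3].
Qed.

Theorem corollary5p11 (A : TwoCat) (e b : Ob A) (p : Hom e b) :
  has_cokernel_diagram p ->
  (monadic p <-> has_left_adjoint p /\ effective_faithful p) /\
  (comonadic p <-> has_right_adjoint p /\ effective_faithful p).
Proof.
  intros HK. split; [apply monadic_iff; exact HK |].
  unfold comonadic.
  rewrite (monadic_iff (A := co A) p (has_cokernel_diagram_co p HK)),
    has_left_adjoint_co, effective_faithful_co_iff.
  reflexivity.
Qed.
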